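(* Fix $\lambda\in\mathbb R$. Almost surely, for all $x\ge y\ge0$, $$\mathcal S(y_b,\lambda+x)=\sup_{i\in\mathbb N}\Big\{Z^{\lambda,b}_i(y)+\mathcal P[(\lambda+y,i)\to(\lambda+x,1)]\Big\},$$ and the supremum is attained at a finite index.
   Context: Last passage percolation (LPP): for a sequence $f=(f_1,f_2,\dots)$ of continuous functions on $\mathbb R$, $y\le x$ and $n\ge m$, an up-right path $\gamma$ from $(y,n)$ to $(x,m)$ is specified by jump times $y=t_{n+1}\le t_n\le\dots\le t_{m+1}\le t_m=x$; its weight is $f[\gamma]=\sum_{i=m}^n(f_i(t_i)-f_i(t_{i+1}))$, and $f[(y,n)\to(x,m)]=\sup_\gamma f[\gamma]$. The parabolic Airy line ensemble $\mathcal P=(\mathcal P_1,\mathcal P_2,\dots)$ is the random collection of continuous non-intersecting curves $\mathcal P_1>\mathcal P_2>\cdots$ on $\mathbb R$ such that for all $m$ and $t_1<\dots<t_m$ the point process $\{(\mathcal P_i(t_j)+t_j^2,t_j)\}$ is determinantal with the extended Airy kernel $K((x,t);(y,s))=\int_0^\infty e^{-u(t-s)}\mathrm{Ai}(x+u)\mathrm{Ai}(y+u)\,du$ for $t\ge s$ and $-\int_{-\infty}^0 e^{-u(t-s)}\mathrm{Ai}(x+u)\mathrm{Ai}(y+u)\,du$ for $t<s$. The parabolic Airy sheet $\mathcal S:\mathbb R^2\to\mathbb R$ is the continuous random process (unique in law) such that (i) $\mathcal S(\cdot+z,\cdot+z)\overset{d}{=}\mathcal S$ for every $z$, and (ii)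 $\mathcal S$ can be coupled with $\mathcal P$ so that $\mathcal S(0,\cdot)=\mathcal P_1$ and, a.s., for all rational $x,y,z$ with $y>0$ there is a random $K$ with $\mathcal S(y,z)-\mathcal S(y,x)=\mathcal P[(y)_k\to(z,1)]-\mathcal P[(y)_k\to(x,1)]$ for $k\ge K$, where $(y)_k=(-(k/(2y))^{1/2},k)$. We work with $\mathcal S$ and $\mathcal P$ coupled in this way, and fix $y_b>0$. Notation: $\mathcal P^\lambda_{j\to i}(x)=\mathcal P[(\lambda,j)\to(\lambda+x,i)]$ for $j\ge i$, $x\ge0$. Boundary data: for $\lambda\in\mathbb R$, $y>0$, $i\in\mathbb N$, $b^{\lambda,y}_i=\lim_{k\to\infty}\big(\mathcal P[(y)_k\to(\lambda,i)]-\mathcal P[(y)_k\to(\lambda,1)]+\mathcal S(y,\lambda)\big)$. It is known that for fixed $\lambda,y$ these limits exist and are finite a.s., and that a.s. for all $x\ge0$, $\mathcal S(y,\lambda+x)=\sup_{i\in\mathbb N}\{b^{\lambda,y}_i+\mathcal P^\lambda_{i\to1}(x)\}$ with the supremum attained at a finite index. Write $b^\lambda_i=b^{\lambda,y_b}_i$, and define the boundary data process $Z^{\lambda,b}_i(x)=\sup_{j\ge i}\{b^\lambda_j+\mathcal P^\lambda_{j\to i}(x)\}$ for $x\ge0$, $i\in\mathbb N$. *)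

From HB Require Import structures.
From mathcomp Require Import all_boot all_order all_algebra.
From mathcomp Require Import all_classical all_reals all_analysis.
Set Implicit Arguments. Unset Strict Implicit. Unset Printing Implicit Defensive.
Import Order.TTheory GRing.Theory Num.Theory.
Import numFieldNormedType.Exports.
Local Open Scope classical_set_scope.
Local Open Scope ring_scope.

Section AiryDefs.
Variable R : realType.

(* A sequence of functions f = (f_1, f_2, ...) is modelled as f : nat -> R -> R;
   only the indices i >= 1 are ever used.  An up-right path from (y,n) to (x,m)
   (m <= n) is given by jump times t : nat -> R with t (n+1) = y, t m = x and
   t (i+1) <= t i for m <= i <= n (only these values of t matter). *)
Definition lpp_path (m n : nat) (y x : R) : set (nat -> R) :=
  [set t | (m <= n)%N /\ t n.+1 = y /\ t m = x /\
           (forall i, (m <= i <= n)%N -> t i.+1 <= t i)].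

Definition lpp_weight (f : nat -> R -> R) (m n : nat) (t : nat -> R) : R :=
  \sum_(m <= i < n.+1) (f i (t i) - f i (t i.+1)).

Definition lpp (f : nat -> R -> R) (p q : R * nat) : R :=
  sup [set w | exists2 t, lpp_path q.2 p.2 p.1 q.1 t & w = lpp_weight f q.2 p.2 t].

Definition lppP (f : nat -> R -> R) (lam : R) (j i : nat) (x : R) : R :=
  lpp f (lam, j) (lam + x, i).

Definition ypt (y : R) (k : nat) : R * nat := (- Num.sqrt (k%:R / (2 * y)), k).

(* Ai is characterized as the solution of Ai'' = x Ai that tends to 0 at +oo
   and satisfies \int_0^oo Ai = 1/3 (this determines Ai uniquely). *)
Definition is_Airy_Ai (Ai : R -> R) : Prop :=
  [/\ (forall x, derivable Ai x 1),
      (forall x, derivable (derive1 Ai) x 1),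
      (forall x, derive1 (derive1 Ai) x = x * Ai x),
      Ai x @[x --> +oo] --> 0 &
      (\int[lebesgue_measure]_(x in `[0%R, +oo[) (Ai x)%:E = (3^-1 : R)%:E)%E].

Definition airy_kernel (Ai : R -> R) (p q : R * R) : R :=
  let: (x, t) := p in let: (y, s) := q in
  if s <= t then
    Rintegral lebesgue_measure `[0, +oo[
      (fun u => expR (- u * (t - s)) * Ai (x + u) * Ai (y + u))
  else
    - Rintegral lebesgue_measure `]-oo, 0]
      (fun u => expR (- u * (t - s)) * Ai (x + u) * Ai (y + u)).

Fixpoint box_integral (cs ds : seq R) (F : seq R -> R) : R :=
  match cs, ds with
  | c :: cs', d :: ds' =>
      Rintegral lebesgue_measure `]c, d]
        (fun x => box_integral cs' ds' (fun xs => F (x :: xs)))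
  | _, _ => F [::]
  end.

(* The determinantal property: for all times t_1 < ... < t_m, the point process
   {(P_i(t_j) + t_j^2, t_j)} (i >= 1) on R x {t_1..t_m} has n-point correlation
   functions det[K(z_a, z_b)] w.r.t. Lebesgue x counting measure; stated via
   factorial moments on products of boxes ]c_a,d_a] x {t_(jj a)}. *)
Definition airy_det_property (d : measure_display) (T : measurableType d)
    (Pr : probability T R) (Ai : R -> R) (P : T -> nat -> R -> R) : Prop :=
  forall (m : nat) (t : 'I_m -> R), {homo t : a b / (a < b)%O >-> a < b} ->
  forall (n : nat) (jj : 'I_n -> 'I_m) (c e : 'I_n -> R),
    (\int[Pr]_w
       (\esum_(iota in [set iota : {ffun 'I_n -> nat} |
            (forall a, (1 <= iota a)%N) /\
            (forall a b, a <> b -> (iota a, jj a) <> (iota b, jj b)) /\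
            (forall a, (P w (iota a) (t (jj a)) + t (jj a) ^+ 2)%R \in `]c a, e a])])
          1)%E
     = (box_integral [seq c a | a <- enum 'I_n] [seq e a | a <- enum 'I_n]
          (fun xs => \det (\matrix_(a, b)
              airy_kernel Ai (nth 0 xs a, t (jj a)) (nth 0 xs b, t (jj b)))))%:E)%E.

Definition is_parabolic_Airy_line_ensemble (d : measure_display)
    (T : measurableType d) (Pr : probability T R) (Ai : R -> R)
    (P : T -> nat -> R -> R) : Prop :=
  [/\ (forall i t, measurable_fun setT (fun w => P w i t)),
      (forall w i, (1 <= i)%N -> continuous (P w i)),
      (forall w i t, (1 <= i)%N -> P w i.+1 t < P w i t) &
      airy_det_property Pr Ai P].

Definition is_Airy_sheet_coupled (d : measure_display) (T : measurableType d)
    (Pr : probability T R) (P : T -> nat -> R -> R) (S : T -> R -> R -> R) : Prop :=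
  [/\ (forall u v, measurable_fun setT (fun w => S w u v)),
      (forall w, continuous (fun p : R * R => S w p.1 p.2)),
      (* (i) S(. + z, . + z) has the same law as S (finite-dim. distributions) *)
      (forall (z : R) (n : nat) (u v c e : 'I_n -> R),
         Pr [set w | forall a, S w (u a + z) (v a + z) \in `]c a, e a]]
         = Pr [set w | forall a, S w (u a) (v a) \in `]c a, e a]]),
      {ae Pr, forall w, forall x, S w 0 x = P w 1%N x} &
      {ae Pr, forall w, forall x y z : rat, 0 < y ->
         exists K : nat, forall k : nat, (K < k)%N ->
           S w (ratr y) (ratr z) - S w (ratr y) (ratr x)
           = lpp (P w) (ypt (ratr y) k) (ratr z, 1%N)
             - lpp (P w) (ypt (ratr y) k) (ratr x, 1%N)}].

Definition airy_bseq (T : Type) (P : T -> nat -> R -> R) (S : T -> R -> R -> R)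
    (lam y : R) (w : T) (i : nat) : nat -> R :=
  fun k => lpp (P w) (ypt y k) (lam, i) - lpp (P w) (ypt y k) (lam, 1%N) + S w y lam.

Definition bdata (T : Type) (P : T -> nat -> R -> R) (S : T -> R -> R -> R)
    (lam y : R) (w : T) (i : nat) : R :=
  limn (airy_bseq P S lam y w i).

Definition Zbd (T : Type) (P : T -> nat -> R -> R) (S : T -> R -> R -> R)
    (lam yb : R) (w : T) (i : nat) (x : R) : \bar R :=
  ereal_sup [set (bdata P S lam yb w j + lppP (P w) lam j i x)%:E
            | j in [set j : nat | (i <= j)%N]].

End AiryDefs.

From HB Require Import structures.
From mathcomp Require Import all_boot all_order all_algebra.
From mathcomp Require Import all_classical all_reals all_analysis.
From mathcomp Require Import lra zify.
Import Order.TTheory GRing.Theory Num.Theory.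
Import numFieldNormedType.Exports.
Local Open Scope classical_set_scope.
Local Open Scope ring_scope.

(* Lemma 2.7 is a deterministic consequence of the variational formula
     S(y_b, lam + x) = sup_i { b_i + P[(lam, i) -> (lam + x, 1)] }      (VF)
   (given as a hypothesis, supremum attained) together with two metric
   properties of last passage percolation across the vertical line at
   lam + y, valid for any sequence of continuous functions f:
   - superadditivity: f[(a,j) -> (c,i)] + f[(c,i) -> (b,m)] <= f[(a,j) -> (b,m)]
     for m <= i <= j and a <= c <= b (concatenate two paths);
   - splitting: for some i in [m, j],
     f[(a,j) -> (b,m)] <= f[(a,j) -> (c,i)] + f[(c,i) -> (b,m)]
     (cut every path at the line where it crosses level c and maximise the
     right-hand side over the finitely many lines i).
   The theorem applies this on the almost sure event where (VF) holds. *)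

Section Preliminaries.
Local Set Implicit Arguments. Local Unset Strict Implicit.
Variable R : realType.

Lemma continuous_segment_bounded (g : R -> R) (a b : R) : continuous g ->
  exists C, forall z, a <= z <= b -> `|g z| <= C.
Proof.
move=> cg.
have /compact_bounded[M [_ HM]] :=
  continuous_compact (continuous_subspaceT (A := `[a, b]) cg) (@segment_compact _ a b).
exists (M + 1) => z zab; apply: HM; first lra.
by exists z => //; rewrite /= in_itv.
Qed.

Lemma nat_argmax (g : nat -> R) m j : (m <= j)%N ->
  exists2 i, (m <= i <= j)%N & forall k, (m <= k <= j)%N -> g k <= g i.
Proof.
move=> mj; have mI : (m < j.+1)%N by [].
case: (arg_maxP (fun i : 'I_j.+1 => g i) (P := fun i : 'I_j.+1 => (m <= i)%N)
         (i0 := Ordinal mI) (leqnn m)) => i mi Hi.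
exists i; first by rewrite mi -ltnS ltn_ord.
by move=> k /andP[mk kj]; exact: (Hi (Ordinal (kj : (k < j.+1)%N))).
Qed.
End Preliminaries.

Section LastPassagePercolation.
Local Set Implicit Arguments. Local Unset Strict Implicit.
Variable R : realType.
Implicit Types (f : nat -> R -> R) (t : nat -> R) (a b c : R).

Lemma lpp_path_mono m n a b t i k : lpp_path m n a b t ->
  (m <= i <= k)%N -> (k <= n.+1)%N -> t k <= t i.
Proof.
move=> [_ [_ [_ t_step]]] /andP[mi]; elim: k => [|k IH] ik kn.
  by have -> : i = 0%N by lia.
have [->|ik'] := eqVneq i k.+1; first by [].
apply: le_trans (t_step k _) (IH _ _); lia.
Qed.

Lemma lpp_path_range m n a b t k : lpp_path m n a b t ->
  (m <= k <= n.+1)%N -> a <= t k <= b.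
Proof.
move=> tp /andP[mk kn]; have [mn [ta [tb _]]] := tp.
by rewrite -ta -tb (lpp_path_mono (i := k) (k := n.+1) tp)
  ?(lpp_path_mono (i := m) (k := k) tp) //; lia.
Qed.

Lemma lpp_path_trivial m n a b : (m <= n)%N -> a <= b ->
  lpp_path m n a b (fun k => if (k <= m)%N then b else a).
Proof.
move=> mn ab; split=> //; split; first by rewrite ifF //; lia.
split; first by rewrite leqnn.
by move=> i /andP[mi _]; do 2 case: ifPn => //; lia.
Qed.

Definition glue (i : nat) (t1 t2 : nat -> R) : nat -> R :=
  fun k => if (k <= i)%N then t2 k else t1 k.

Lemma glue_path m i j a c b t1 t2 : (m <= i <= j)%N ->
  lpp_path i j a c t1 -> lpp_path m i c b t2 -> lpp_path m j a b (glue i t1 t2).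
Proof.
move=> /andP[mi ij] [_ [t1a [t1c step1]]] [_ [t2c [t2b step2]]].
split; first lia.
split; first by rewrite /glue ifF //; lia.
split; first by rewrite /glue mi.
move=> k /andP[mk kj]; rewrite /glue.
case: (ltngtP k i) => [ki|ik|->].
- by apply: step2; lia.
- by apply: step1; lia.
- apply: le_trans (step1 i _) _; first lia.
  by rewrite t1c -t2c; apply: step2; lia.
Qed.

(* Weights add under gluing: the two contributions of line i telescope
   since t1 leaves line i where t2 enters it. *)
Lemma glue_weight f m i j t1 t2 : (m <= i <= j)%N -> t1 i = t2 i.+1 ->
  lpp_weight f m j (glue i t1 t2) = lpp_weight f i j t1 + lpp_weight f m i t2.
Proof.
move=> /andP[mi ij] t12; rewrite /lpp_weight (@big_cat_nat _ _ _ i) //=; last lia.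
rewrite !(big_ltn (m := i)) ?ltnS // (big_nat_recr i m) //=.
have -> : \sum_(m <= k < i) (f k (glue i t1 t2 k) - f k (glue i t1 t2 k.+1)) =
          \sum_(m <= k < i) (f k (t2 k) - f k (t2 k.+1)).
  by apply: eq_big_nat => k /andP[_ ki]; rewrite /glue ki (ltnW ki).
have -> : \sum_(i.+1 <= k < j.+1) (f k (glue i t1 t2 k) - f k (glue i t1 t2 k.+1)) =
          \sum_(i.+1 <= k < j.+1) (f k (t1 k) - f k (t1 k.+1)).
  by apply: eq_big_nat => k /andP[ik _]; rewrite /glue !ifF //; lia.
rewrite /glue leqnn ltnn t12; lra.
Qed.

Lemma lpp_path_cross m n a b c t : lpp_path m n a b t -> a <= c <= b ->
  exists2 i, (m <= i <= n)%N & t i.+1 <= c <= t i.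
Proof.
move=> tp /andP[ac cb]; have [mn [ta [tb _]]] := tp.
suff down : forall d k, (k + d = n)%N -> (m <= k)%N -> c <= t k ->
    exists2 i, (k <= i <= n)%N & t i.+1 <= c <= t i.
  have [i ki ci] := down (n - m)%N m ltac:(lia) (leqnn _) ltac:(by rewrite tb).
  by exists i => //; lia.
elim=> [|d IH] k kd mk ck.
  by exists k; [lia|rewrite ck andbT (_ : k = n) ?ta //; lia].
have [tk|tk] := leP (t k.+1) c; first by exists k; [lia|rewrite tk ck].
have [i ki ci] := IH k.+1 ltac:(lia) ltac:(lia) (ltW tk).
by exists i => //; lia.
Qed.

Lemma lpp_path_cut m i j a b c t : (m <= i <= j)%N -> lpp_path m j a b t ->
  t i.+1 <= c <= t i ->
  exists t1 t2, [/\ lpp_path i j a c t1, lpp_path m i c b t2 & glue i t1 t2 = t].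
Proof.
move=> /andP[mi ij] [_ [ta [tb step]]] /andP[tc ct].
exists (fun k => if k == i then c else t k), (fun k => if k == i.+1 then c else t k).
split.
- split=> //; split; first by rewrite ifF //; lia.
  split; first by rewrite eqxx.
  move=> k /andP[ik kj]; have [->|ki] := eqVneq k i; first by rewrite ?eqxx ifF //; lia.
  by rewrite !ifF //; try apply: step; lia.
- split=> //; split; first by rewrite eqxx.
  split; first by rewrite ifF //; lia.
  move=> k /andP[mk ki]; have [->|ki'] := eqVneq k i; first by rewrite ?eqxx ifF //; lia.
  by rewrite !ifF //; try apply: step; lia.
- by apply/funext => k; rewrite /glue; case: leqP => ki; rewrite ifF //; lia.
Qed.

Definition lpp_weights f m n a b : set R :=
  [set w | exists2 t, lpp_path m n a b t & w = lpp_weight f m n t].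

Lemma lppE f m n a b : lpp f (a, n) (b, m) = sup (lpp_weights f m n a b).
Proof. by []. Qed.

Lemma lpp_weights_nonempty f m n a b : (m <= n)%N -> a <= b ->
  lpp_weights f m n a b !=set0.
Proof. by move=> mn ab; eexists; exists (fun k => if (k <= m)%N then b else a);
  first exact: lpp_path_trivial. Qed.

(* Path weights are bounded when the f k, k >= m, are continuous, so lpp is
   a genuine supremum. *)
Lemma lpp_weights_has_sup f m n a b : (forall k, (m <= k)%N -> continuous (f k)) ->
  (m <= n)%N -> a <= b -> has_sup (lpp_weights f m n a b).
Proof.
move=> f_cont mn ab; split; first exact: lpp_weights_nonempty.
have /choice[C f_bnd] : forall k, exists C : R,
    (m <= k)%N -> forall z, a <= z <= b -> `|f k z| <= C.
  move=> k; have [mk|km] := leqP m k; last by exists 0 => mk; lia.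
  by have [C HC] := continuous_segment_bounded a b (f_cont k mk); exists C.
exists (\sum_(m <= k < n.+1) (C k + C k)) => _ [t tp ->].
apply: ler_sum_nat => k /andP[mk kn].
have /(f_bnd k mk) : a <= t k <= b by apply: lpp_path_range tp _; lia.
have /(f_bnd k mk) : a <= t k.+1 <= b by apply: lpp_path_range tp _; lia.
have := ler_norm (f k (t k)); have := ler_norm (- f k (t k.+1)); rewrite normrN; lra.
Qed.

Lemma lpp_concat f m i j a c b : (forall k, (m <= k)%N -> continuous (f k)) ->
  (m <= i <= j)%N -> a <= c <= b ->
  lpp f (a, j) (c, i) + lpp f (c, i) (b, m) <= lpp f (a, j) (b, m).
Proof.
move=> f_cont /[dup] mij /andP[mi ij] /andP[ac cb]; rewrite !lppE.
have sup_mj := lpp_weights_has_sup f_cont (leq_trans mi ij) (le_trans ac cb).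
have [[w1 W1] _] : has_sup (lpp_weights f i j a c).
  by apply: lpp_weights_has_sup => // k ik; apply: f_cont; lia.
have [[w2 W2] _] : has_sup (lpp_weights f m i c b) by exact: lpp_weights_has_sup.
have glued w1' w2' : lpp_weights f i j a c w1' -> lpp_weights f m i c b w2' ->
    w1' + w2' <= sup (lpp_weights f m j a b).
  move=> [t1 p1 ->] [t2 p2 ->]; apply: sup_upper_bound => //.
  exists (glue i t1 t2); first exact: glue_path p1 p2.
  by rewrite glue_weight //; case: p1 => _ [_ [-> _]]; case: p2 => _ [-> _].
suff : sup (lpp_weights f m i c b) <=
       sup (lpp_weights f m j a b) - sup (lpp_weights f i j a c) by lra.
apply: ge_sup; first by exists w2.
move=> w2' W2'; suff : sup (lpp_weights f i j a c) <= sup (lpp_weights f m j a b) - w2' by lra.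
apply: ge_sup; first by exists w1.
by move=> w1' W1'; have := glued _ _ W1' W2'; lra.
Qed.

Lemma lpp_split f m j a c b : (forall k, (m <= k)%N -> continuous (f k)) ->
  (m <= j)%N -> a <= c <= b ->
  exists2 i, (m <= i <= j)%N &
    lpp f (a, j) (b, m) <= lpp f (a, j) (c, i) + lpp f (c, i) (b, m).
Proof.
move=> f_cont mj acb; have /andP[ac cb] := acb.
have [i mij best] := nat_argmax (fun i => lpp f (a, j) (c, i) + lpp f (c, i) (b, m)) mj.
exists i => //; rewrite [leLHS]lppE; apply: ge_sup.
  exact: lpp_weights_nonempty (le_trans ac cb).
move=> _ [t tp ->]; have [k mkj tc] := lpp_path_cross tp acb.
have [t1 [t2 [p1 p2 <-]]] := lpp_path_cut mkj tp tc.
move: (mkj) => /andP[mk kj]; apply: le_trans (best k mkj).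
have t12 : t1 k = t2 k.+1 by case: p1 => _ [_ [-> _]]; case: p2 => _ [-> _].
rewrite glue_weight //; apply: lerD; rewrite lppE; apply: sup_upper_bound.
- by apply: lpp_weights_has_sup => // l kl; apply: f_cont; lia.
- by exists t1.
- exact: lpp_weights_has_sup.
- by exists t2.
Qed.
End LastPassagePercolation.

Section BoundaryProcess.
Local Set Implicit Arguments. Local Unset Strict Implicit.
Variable R : realType.
Variables (f : nat -> R -> R) (b : nat -> R) (lam : R).
Hypothesis f_cont : forall k, (1 <= k)%N -> continuous (f k).

Definition boundary_process (i : nat) (y : R) : \bar R :=
  ereal_sup [set (b j + lppP f lam j i y)%:E | j in [set j : nat | (i <= j)%N]].

(* If s dominates b_j + f[(lam,j) -> (lam+x,1)] for all j, then by
   superadditivity it dominates Z_k(y) + f[(lam+y,k) -> (lam+x,1)]. *)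
Lemma boundary_process_le (s x y : R) k : 0 <= y <= x -> (1 <= k)%N ->
  (forall j, (1 <= j)%N -> b j + lppP f lam j 1 x <= s) ->
  (boundary_process k y + (lpp f (lam + y, k) (lam + x, 1%N))%:E <= s%:E)%E.
Proof.
move=> /andP[y0 yx] k1 s_ub.
rewrite -[s](subrK (lpp f (lam + y, k) (lam + x, 1%N))) EFinD; apply: leeD2r.
apply: ge_ereal_sup => _ [j /= kj <-]; rewrite lee_fin.
have := s_ub j (leq_trans k1 kj).
have := @lpp_concat _ f 1 k j lam (lam + y) (lam + x) f_cont
  ltac:(by rewrite k1 kj) ltac:(apply/andP; split; lra).
rewrite /lppP; lra.
Qed.

(* Splitting the path from (lam, i0) to (lam + x, 1) at lam + y bounds the
   i0-th term of the variational formula by some Z_i(y) + f[...]. *)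
Lemma boundary_process_attained (x y : R) i0 : 0 <= y <= x -> (1 <= i0)%N ->
  exists2 i, (1 <= i)%N &
    ((b i0 + lppP f lam i0 1 x)%:E
       <= boundary_process i y + (lpp f (lam + y, i) (lam + x, 1%N))%:E)%E.
Proof.
move=> /andP[y0 yx] i0_1.
have [i /andP[i1 ii0] split_le] := @lpp_split _ f 1 i0 lam (lam + y) (lam + x)
  f_cont i0_1 ltac:(apply/andP; split; lra).
exists i => //; apply: le_trans (_ : ((b i0 + lppP f lam i0 i y)%:E
   + (lpp f (lam + y, i) (lam + x, 1%N))%:E <= _)%E).
  by rewrite -EFinD lee_fin; move: split_le; rewrite /lppP; lra.
by apply: leeD2r; apply: ereal_sup_ubound; exists i0.
Qed.

Lemma boundary_process_decomposition (s x y : R) : 0 <= y <= x ->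
  (exists2 i0, (1 <= i0)%N & s = b i0 + lppP f lam i0 1 x) ->
  (forall j, (1 <= j)%N -> b j + lppP f lam j 1 x <= s) ->
  exists2 i, (1 <= i)%N &
    (s%:E = boundary_process i y + (lpp f (lam + y, i) (lam + x, 1%N))%:E /\
     (forall j, (1 <= j)%N ->
        boundary_process j y + (lpp f (lam + y, j) (lam + x, 1%N))%:E <= s%:E))%E.
Proof.
move=> yx [i0 i0_1 s_at] s_ub.
have [i i1 s_le] := boundary_process_attained yx i0_1.
exists i => //; split=> [|j j1]; last exact: boundary_process_le.
by apply: le_anti; rewrite boundary_process_le // s_at s_le.
Qed.
End BoundaryProcess.

Theorem lemma2p7 (R : realType) (d : measure_display) (T : measurableType d)
  (Pr : probability T R) (Ai : R -> R)
  (P : T -> nat -> R -> R) (S : T -> R -> R -> R) (yb lam : R) :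
  is_Airy_Ai Ai ->
  is_parabolic_Airy_line_ensemble Pr Ai P ->
  is_Airy_sheet_coupled Pr P S ->
  0 < yb ->
  (* known facts (context): for fixed lam', y > 0, a.s. the limits b^{lam',y}_i
     exist and are finite ... *)
  (forall lam' y : R, 0 < y ->
     {ae Pr, forall w, forall i : nat, (1 <= i)%N -> cvgn (airy_bseq P S lam' y w i)}) ->
  (* ... and a.s. for all x >= 0, S(y, lam'+x) = sup_i {b_i + P^lam'_{i->1}(x)},
     the supremum being attained at a finite index *)
  (forall lam' y : R, 0 < y ->
     {ae Pr, forall w, forall x : R, 0 <= x ->
        exists2 i : nat, (1 <= i)%N &
          S w y (lam' + x) = bdata P S lam' y w i + lppP (P w) lam' i 1 x /\
          (forall j : nat, (1 <= j)%N ->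
             bdata P S lam' y w j + lppP (P w) lam' j 1 x <= S w y (lam' + x))}) ->
  {ae Pr, forall w, forall x y : R, 0 <= y -> y <= x ->
     exists2 i : nat, (1 <= i)%N &
       ((S w yb (lam + x))%:E
          = Zbd P S lam yb w i y + (lpp (P w) (lam + y, i) (lam + x, 1%N))%:E /\
        (forall j : nat, (1 <= j)%N ->
           Zbd P S lam yb w j y + (lpp (P w) (lam + y, j) (lam + x, 1%N))%:E
             <= (S w yb (lam + x))%:E))%E}.
Proof.
(* Only the continuity of the lines and the variational formula at (lam, yb)
   are needed; on that event the statement is deterministic. *)
move=> _ [_ P_cont _ _] _ yb_gt0 _ S_sup.
apply: filterS (S_sup lam yb yb_gt0) => w S_max x y y_ge0 yx.
have [i0 i0_1 [S_at S_ub]] := S_max x (le_trans y_ge0 yx).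
exact: (@boundary_process_decomposition _ (P w) (bdata P S lam yb w) lam
  (P_cont w) _ x y ltac:(by rewrite y_ge0 yx) (ex_intro2 _ _ i0 i0_1 S_at) S_ub).
Qed.
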